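(* Let $f:\mathbb{R}^n\to\mathbb{R}$ be continuously differentiable, let $s$ be a positive integer with $s\le n$, and let $\eta>0$. A point $\mathbf x\in\mathbb{R}^n$ is an $\eta$-stationary point of the problem $\min\{f(\mathbf x):\|\mathbf x\|_0\le s\}$ if and only if there exists $T\in\mathcal{T}(\mathbf x;\eta)$ with $F_\eta(\mathbf x;T)=0$. Furthermore, a point $\mathbf x\in\mathbb{R}^n$ satisfies the fixed-point equation $\mathbf x=\mathcal{P}_s(\mathbf x-\eta\nabla f(\mathbf x))$ (i.e. $\mathcal{P}_s(\mathbf x-\eta\nabla f(\mathbf x))=\{\mathbf x\}$) if and only if $F_\eta(\mathbf x;T)=0$ for every $T\in\mathcal{T}(\mathbf x;\eta)$.
   Context: $\|\mathbf x\|_0$ is the number of nonzero entries of $\mathbf x$; $\mathbf x$ is $s$-sparse if $\|\mathbf x\|_0\le s$; $\mathrm{supp}(\mathbf x)$ is the set of indices of nonzero entries. For $T\subseteq\{1,\dots,n\}$, $T^c=\{1,\dots,n\}\setminus T$, $\mathbf x_T$ is the subvector of $\mathbf x$ indexed by $T$, and $\nabla_T f(\mathbf x)=(\nabla f(\mathbf x))_T$. The hard-thresholding map is the set-valued map $\mathcal{P}_s(\mathbf x)=\mathrm{argmin}_{\mathbf z}\{\|\mathbf x-\mathbf z\|:\|\mathbf z\|_0\le s\}$ (Euclidean norm), i.e. the set of vectors obtained by keeping $s$ largest-magnitude entries of $\mathbf x$ and zeroing the rest. An $s$-sparse vector $\mathbf x^*$ is an $\eta$-stationary point if $\mathbf x^*\in\mathcal{P}_s(\mathbf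 x^*-\eta\nabla f(\mathbf x^* ))$. Define $\mathcal{T}(\mathbf x;\eta)=\{T\subseteq\{1,\dots,n\}: |T|=s,\ T\supseteq\mathrm{supp}(\mathbf z)\text{ for some }\mathbf z\in\mathcal{P}_s(\mathbf x-\eta\nabla f(\mathbf x))\}$, and for $T\in\mathcal{T}(\mathbf x;\eta)$ define $F_\eta(\mathbf x;T)=\begin{bmatrix}\nabla_T f(\mathbf x)\\ \mathbf x_{T^c}\end{bmatrix}\in\mathbb{R}^n$. *)

From HB Require Import structures.
From mathcomp Require Import all_boot all_order all_algebra.
From mathcomp Require Import all_classical all_reals all_analysis.
Set Implicit Arguments. Unset Strict Implicit. Unset Printing Implicit Defensive.
Import Order.TTheory GRing.Theory Num.Theory.
Import numFieldNormedType.Exports.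
Local Open Scope ring_scope.

Section Defs.
Variable R : realType.
Variable n : nat.

Definition supp (x : 'rV[R]_n) : {set 'I_n} := [set i | x 0 i != 0].

Definition l0 (x : 'rV[R]_n) : nat := #|supp x|.

Definition enorm (x : 'rV[R]_n) : R := Num.sqrt (\sum_i x 0 i ^+ 2).

Definition grad (f : 'rV[R]_n -> R) (x : 'rV[R]_n) : 'rV[R]_n :=
  \row_i ('D_(delta_mx 0 i) f x).

Definition inPs (s : nat) (x z : 'rV[R]_n) : Prop :=
  (l0 z <= s)%N /\
  forall w : 'rV[R]_n, (l0 w <= s)%N -> enorm (x - z) <= enorm (x - w).

Definition eta_stationary (f : 'rV[R]_n -> R) (s : nat) (eta : R) (x : 'rV[R]_n) : Prop :=
  (l0 x <= s)%N /\ inPs s (x - eta *: grad f x) x.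

Definition inTset (f : 'rV[R]_n -> R) (s : nat) (eta : R) (x : 'rV[R]_n)
  (T : {set 'I_n}) : Prop :=
  #|T| = s /\ exists z, inPs s (x - eta *: grad f x) z /\ supp z \subset T.

(* F_eta(x; T) = [grad_T f(x); x_{T^c}] (placed at the respective indices) *)
Definition Feta (f : 'rV[R]_n -> R) (x : 'rV[R]_n) (T : {set 'I_n}) : 'rV[R]_n :=
  \row_i (if i \in T then grad f x 0 i else x 0 i).

End Defs.

From HB Require Import structures.
From mathcomp Require Import all_boot all_order all_algebra.
From mathcomp Require Import all_classical all_reals all_analysis.
Set Implicit Arguments. Unset Strict Implicit. Unset Printing Implicit Defensive.
Import Order.TTheory GRing.Theory Num.Theory.
Import numFieldNormedType.Exports.
Local Open Scope ring_scope.

(* Write y = x - eta grad f(x) and y_T for y with the entries outside T zeroed.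
   A best s-sparse approximation z of y whose support lies in a set T of size s
   is y_T: for i in T, resetting z_i to y_i keeps z s-sparse and lowers
   ||y - z||^2 by (y_i - z_i)^2.  Since eta <> 0, F_eta(x; T) = 0 says exactly
   x = y_T.  Both equivalences follow, using that a projection exists and that
   every support of size at most s lies in some set of size s (as s <= n). *)

Lemma subset_card_extend (T : finType) (A : {set T}) k :
  (#|A| <= k <= #|T|)%N -> exists2 B : {set T}, A \subset B & #|B| = k.
Proof.
elim: k => [|k IHk] /andP[Ak kT].
  by exists A => //; apply/eqP; rewrite -leqn0.
have [Alt|Age] := ltnP #|A| k.+1; last first.
  by exists A => //; apply/eqP; rewrite eqn_leq Ak Age.
have [B AB cardB] := IHk (introT andP (conj Alt (ltnW kT))).
have /set0Pn[x] : ~: B != finset.set0.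
  by rewrite -card_gt0 -(ltn_add2l #|B|) addn0 cardsC cardB.
rewrite inE => Bx; exists (x |: B); last by rewrite cardsU1 Bx cardB.
exact: fintype.subset_trans AB (subsetU1 x B).
Qed.

Section SparseProjection.
Variables (R : realType) (n : nat).
Implicit Types (x y z w : 'rV[R]_n) (T : {set 'I_n}).

Definition sqnorm x : R := \sum_i x 0 i ^+ 2.

Definition restrict T y : 'rV[R]_n := \row_i (if i \in T then y 0 i else 0).

Lemma sqnorm_ge0 x : 0 <= sqnorm x.
Proof. by apply: sumr_ge0 => i _; rewrite sqr_ge0. Qed.

Lemma inPs_sqnorm s y z : inPs s y z <->
  (l0 z <= s)%N /\ forall w, (l0 w <= s)%N -> sqnorm (y - z) <= sqnorm (y - w).
Proof.
rewrite /inPs /enorm; split=> -[sz zmin]; split=> // w sw.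
  by rewrite -ler_sqrt ?sqnorm_ge0 //; apply: zmin.
by rewrite ler_sqrt ?sqnorm_ge0 //; apply: zmin.
Qed.

Lemma supp_restrict T y : supp (restrict T y) \subset T.
Proof.
by apply/fintype.subsetP => i; rewrite inE mxE; case: ifP; rewrite ?eqxx.
Qed.

Lemma supp_subset_eq0 [x T i] : supp x \subset T -> i \notin T -> x 0 i = 0.
Proof.
move=> xT iT; apply/eqP; apply: contraNT iT => xi.
by apply: (fintype.subsetP xT); rewrite inE.
Qed.

Lemma sqnorm_restrict_le T y w :
  supp w \subset T -> sqnorm (y - restrict T y) <= sqnorm (y - w).
Proof.
move=> wT; apply: ler_sum => i _; rewrite !mxE; case: ifPn => iT.
  by rewrite subrr expr0n sqr_ge0.
by rewrite (supp_subset_eq0 wT iT).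
Qed.

Lemma exists_inPs s y : exists z, inPs s y z.
Proof.
pose sparse : pred {set 'I_n} := fun T => (#|T| <= s)%N.
have sparse0 : sparse finset.set0 by rewrite /sparse cards0.
have [T cardT Tmin] := arg_minP (fun T => sqnorm (y - restrict T y)) sparse0.
exists (restrict T y); apply/inPs_sqnorm; split.
  exact: leq_trans (subset_leq_card (supp_restrict T y)) cardT.
by move=> w sw; apply: le_trans (Tmin _ sw) _; apply/sqnorm_restrict_le/subxx.
Qed.

Lemma inPs_coord s y z i :
  inPs s y z -> (#|i |: supp z| <= s)%N -> z 0 i = y 0 i.
Proof.
move=> /inPs_sqnorm[_ zmin] card_iz.
pose w := \row_j (if j == i then y 0 j else z 0 j).
have sw : (l0 w <= s)%N.
  apply: leq_trans card_iz; apply: subset_leq_card; apply/fintype.subsetP => j.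
  by rewrite !inE mxE; case: (j =P i).
have := zmin w sw; rewrite /sqnorm (bigD1 i) //= [leRHS](bigD1 i) //=.
rewrite !mxE eqxx subrr expr0n add0r.
rewrite [leRHS](eq_bigr (fun j => ((y - z) 0 j) ^+ 2)); last first.
  by move=> j /negbTE ji; rewrite !mxE ji.
rewrite gerDr => le0.
by apply/eqP; rewrite eq_sym -subr_eq0 -sqrf_eq0 eq_le le0 sqr_ge0.
Qed.

Lemma inPs_restrict s y z T :
  inPs s y z -> supp z \subset T -> #|T| = s -> z = restrict T y.
Proof.
move=> zP zT cardT; apply/rowP => i; rewrite mxE; case: ifPn => iT.
  apply: inPs_coord zP _; rewrite -cardT subset_leq_card //.
  by rewrite finset.subUset finset.sub1set iT.
exact: supp_subset_eq0 zT iT.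
Qed.

Lemma Feta_eq0 (f : 'rV[R]_n -> R) (eta : R) x T : eta != 0 ->
  Feta f x T = 0 <-> x = restrict T (x - eta *: grad f x).
Proof.
move=> eta0.
have coordE i : (Feta f x T 0 i == 0) =
                (x 0 i == restrict T (x - eta *: grad f x) 0 i).
  rewrite !mxE; case: ifP => // _.
  by rewrite -[RHS]subr_eq0 subKr mulf_eq0 (negbTE eta0).
split=> [/rowP F0|xE]; apply/rowP => i; apply/eqP.
  by rewrite -coordE F0 mxE.
by rewrite [X in _ == X]mxE coordE -xE.
Qed.

End SparseProjection.

Theorem lemma4 (R : realType) (n : nat) (f : 'rV[R]_n -> R)
  (hdiff : forall x : 'rV[R]_n, differentiable f x)
  (hcont : continuous (grad f))
  (s : nat) (hs0 : (0 < s)%N) (hsn : (s <= n)%N)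
  (eta : R) (heta : 0 < eta) :
  (forall x : 'rV[R]_n,
     eta_stationary f s eta x <->
     exists T : {set 'I_n}, inTset f s eta x T /\ Feta f x T = 0) /\
  (forall x : 'rV[R]_n,
     (forall z : 'rV[R]_n, inPs s (x - eta *: grad f x) z <-> z = x) <->
     (forall T : {set 'I_n}, inTset f s eta x T -> Feta f x T = 0)).
Proof.
have FetaE x T : Feta f x T = 0 <-> x = restrict T (x - eta *: grad f x).
  by apply: Feta_eq0; rewrite gt_eqF.
have extend (z : 'rV[R]_n) : (l0 z <= s)%N ->
    exists2 T : {set 'I_n}, supp z \subset T & #|T| = s.
  by move=> sz; apply: subset_card_extend; rewrite sz card_ord.
split=> x; split.
- case=> sx xP; have [T xT cardT] := extend x sx.
  exists T; split; first by split=> //; exists x.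
  exact/FetaE/(inPs_restrict xP xT cardT).
- case=> T [[cardT [z [zP zT]]] /FetaE xE].
  have zx : z = x by rewrite (inPs_restrict zP zT cardT) -xE.
  by rewrite zx in zP; split=> //; case: zP.
- move=> Ps1 T [cardT [z [zP zT]]]; apply/FetaE.
  by move: (inPs_restrict zP zT cardT); rewrite {1}((Ps1 z).1 zP).
- move=> FT.
  have Ps_x z : inPs s (x - eta *: grad f x) z -> z = x.
    move=> zP; have [T zT cardT] := extend z zP.1.
    have xT : inTset f s eta x T by split=> //; exists z.
    by rewrite (inPs_restrict zP zT cardT) -((FetaE x T).1 (FT T xT)).
  move=> z; split=> [/Ps_x //|->].
  have [z0 z0P] : exists z0, inPs s (x - eta *: grad f x) z0.
    exact: exists_inPs.
  by move: (z0P); rewrite (Ps_x z0 z0P).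
Qed.
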